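(* Let $\mathcal{S}$ be a state space, let $\mathcal{A}\subset\mathbb{R}^d$ be an action space of finite positive Lebesgue measure, let $R:\mathcal{S}\times\mathcal{A}\to\mathbb{R}$ be a reward function, let $\tau(\cdot\mid s,a)$ be a transition kernel, and let $\gamma\in(0,1)$ and $\tilde{\alpha}>0$. Let $\mathcal{Q}$ be a probability distribution over (measurable) functions $Q:\mathcal{S}\times\mathcal{A}\to\mathbb{R}$ such that for every state-action pair $(s,a)$ the random variable $Q(s,a)$, $Q\sim\mathcal{Q}$, has bounded support and is sub-Gaussian with mean $\mu(s,a)$ and variance proxy $\sigma^2(s,a)$. Define the (one-step distributional soft) Bellman optimality backup, for a given next state $s'\sim\tau(\cdot\mid s,a)$, by $$\mathcal{T}^{*}Q(s,a)=R(s,a)+\gamma\,\mathbb{E}_{Q\sim\mathcal{Q}}\Big[\tilde{\alpha}\log\Big(\int_{\mathcal{A}}\exp\big(\tilde{\alpha}^{-1}Q(s',a')\big)\,da'\Big)\Big].$$ Then for every $(s,a)$ and every next state $s'$, $$\mathcal{T}^{*}Q(s,a)\le R(s,a)+\gamma\,\tilde{\alpha}\log\Big(\int_{\mathcal{A}}\exp\Big(\tilde{\alpha}^{-1}\mu(s',a')+\tfrac12\tilde{\alpha}^{-2}\sigma^2(s',a')\Big)\,da'\Big).$$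
   Context: A real random variable $X$ with mean $\mu=\mathbb{E}[X]$ is called sub-Gaussian with variance proxy $\sigma^2$ if $\mathbb{E}[\exp(\lambda X)]\le\exp(\lambda\mu+\tfrac12\lambda^2\sigma^2)$ for all $\lambda\in\mathbb{R}$. The functions $\mu(s,a)=\mathbb{E}_{Q\sim\mathcal{Q}}[Q(s,a)]$ and $\sigma^2(s,a)$ are assumed measurable in $a$. *)

From HB Require Import structures.
From mathcomp Require Import all_boot all_order all_algebra.
From mathcomp Require Import all_classical all_reals all_analysis.
Set Implicit Arguments. Unset Strict Implicit. Unset Printing Implicit Defensive.
Import Order.TTheory GRing.Theory Num.Theory.
Local Open Scope classical_set_scope.
Local Open Scope ring_scope.
Local Open Scope ereal_scope.

Definition sub_gaussian {d} {Omega : measurableType d} {R : realType}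
  (P : probability Omega R) (X : Omega -> R) (mu s2 : R) : Prop :=
  \int[P]_w (X w)%:E = mu%:E /\
  forall l : R, \int[P]_w expeR ((l * X w)%:E)
                <= expeR ((l * mu + 2^-1 * l ^+ 2 * s2)%:E).

Definition bounded_support {d} {Omega : measurableType d} {R : realType}
  (P : probability Omega R) (X : Omega -> R) : Prop :=
  exists M : R, {ae P, forall w, (`|X w| <= M)%R}.

Definition soft_backup {d1 d2} {Omega : measurableType d1}
  {X : measurableType d2} {R : realType} {S : Type}
  (P : probability Omega R) (lam : {measure set X -> \bar R}) (A : set X)
  (Rw : S -> X -> R) (gamma alpha : R) (Q : Omega -> S -> X -> R)
  (s : S) (a : X) (s' : S) : \bar R :=
  (Rw s a)%:E + gamma%:E *
    \int[P]_w (alpha%:E *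
       lne (\int[lam]_(a' in A) expeR ((alpha^-1 * Q w s' a')%:E))).

(* Since ln is concave, it lies below its tangent line at any j > 0, so for a
   probability P and Z >= 0 one gets E[ln Z] <= ln j as soon as E[Z] <= j
   (Jensen).  Take Z := \int_A exp(Q(s', a')/alpha) da' and
   j := \int_A exp(mu(s', a')/alpha + sigma2(s', a')/(2 alpha^2)) da'.  Tonelli
   exchanges E and \int_A, and the sub-Gaussian moment bound at lambda = 1/alpha,
   applied at each action a', gives E[Z] <= j; positivity of j comes from
   lam A > 0. *)

From HB Require Import structures.
From mathcomp Require Import all_boot all_order all_algebra.
From mathcomp Require Import all_classical all_reals all_analysis.
From mathcomp Require Import measurable_realfun lra.
Set Implicit Arguments.
Unset Strict Implicit.
Unset Printing Implicit Defensive.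
Import Order.TTheory GRing.Theory Num.Theory.
Local Open Scope classical_set_scope.
Local Open Scope ring_scope.

Lemma ln_le_tangent (R : realType) (j z : R) : 0 < j -> 0 < z ->
  ln z <= ln j - 1 + z / j.
Proof.
move=> j0 z0; have zj0 : 0 < z / j by rewrite divr_gt0.
have : -1 < z / j - 1 by lra.
move=> /le_ln1Dx; rewrite addrC subrK ln_div ?posrE //; lra.
Qed.

Local Open Scope ereal_scope.

(* Unlike [le_integral], no integrability is needed: both suprema over simple
   functions in the definition of the integral are monotone in the integrand. *)
Lemma le_integral_nomeas d (T : measurableType d) (R : realType)
  (mu : {measure set T -> \bar R}) (D : set T) (f g : T -> \bar R) :
  {in D, forall x, f x <= g x} ->
  \int[mu]_(x in D) f x <= \int[mu]_(x in D) g x.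
Proof.
move=> fg; have fgD : {in setT, forall x, (f \_ D) x <= (g \_ D) x}.
  by move=> x _; rewrite /patch; case: ifPn => // /fg.
rewrite /integral /=; apply: leeB; apply: ereal_sup_le => _ /= [h hf <-];
  exists h => //= x; apply: le_trans (hf x) _.
- exact: funepos_le fgD x (in_setT x).
- exact: funeneg_le fgD x (in_setT x).
Qed.

Lemma lne_le_tangent (R : realType) (j : R) (z : \bar R) :
  (0 < j)%R -> 0 <= z -> lne z <= (ln j - 1)%:E + (j^-1)%:E * z.
Proof.
move=> j0; case: z => [z| |] // z0.
- rewrite lee_fin in z0.
  have [->|zpos] := eqVneq z 0%R; first by rewrite le0_lneNy // leNye.
  have {zpos}z0 : (0 < z)%R by rewrite lt_neqAle eq_sym zpos.
  by rewrite lne_EFin // -EFinM -EFinD lee_fin mulrC ln_le_tangent.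
- by rewrite gt0_muley ?lte_fin ?invr_gt0 // addey.
Qed.

Lemma integral_lne_le d (T : measurableType d) (R : realType)
  (P : probability T R) (Z : T -> \bar R) (c : R) (J : \bar R) :
  (0 < c)%R -> 0 < J -> measurable_fun setT Z -> (forall x, 0 <= Z x) ->
  \int[P]_x Z x <= J -> \int[P]_x (c%:E * lne (Z x)) <= c%:E * lne J.
Proof.
move=> c0 J0 mZ Z0 ZJ; have [->|Jy] := eqVneq J +oo.
  by rewrite /= gt0_muley ?lte_fin // leey.
have Jfin : J \is a fin_num by rewrite ge0_fin_numE ?ltW // ltey.
rewrite -(fineK Jfin) in J0 ZJ *; set j := fine J in J0 ZJ *.
rewrite lte_fin in J0; rewrite lne_EFin //.
have tangent x : c%:E * lne (Z x) <= (c * (ln j - 1))%:E + (c / j)%:E * Z x.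
  rewrite !EFinM -muleA -muleDr // lee_wpmul2l ?lee_fin ?(ltW c0) //.
  exact: lne_le_tangent.
have Zint : P.-integrable setT Z.
  apply/integrableP; split => //; under eq_integral do rewrite gee0_abs //.
  exact: le_lt_trans ZJ (ltry _).
apply: le_trans (le_integral_nomeas P (fun x _ => tangent x)) _.
rewrite integralD //; [|exact: finite_measure_integrable_cst|exact: integrableZl].
rewrite integral_cst // [X in _ * X](probability_setT P) mule1 integralZl //.
apply: le_trans (leeD2l _ (lee_wpmul2l _ ZJ)) _.
  by rewrite lee_fin divr_ge0 ?ltW.
by rewrite -!EFinM -EFinD lee_fin divfK ?gt_eqF // mulrBr mulr1 subrK.
Qed.

Lemma integral_gt0 d (T : measurableType d) (R : realType)
  (mu : {measure set T -> \bar R}) (D : set T) (g : T -> \bar R) :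
  measurable D -> 0 < mu D -> measurable_fun D g ->
  (forall x, D x -> 0 < g x) -> 0 < \int[mu]_(x in D) g x.
Proof.
move=> mD muD0 mg g0.
rewrite lt0e integral_ge0 ?andbT; last by move=> x /g0/ltW.
apply/eqP => intg0; have : \int[mu]_(x in D) `|g x| = 0.
  by rewrite -intg0; apply: eq_integral => x /set_mem/g0/ltW/gee0_abs.
move=> /(ae_eq_integral_abs mu mD mg) [N [mN muN0 gN]].
have DN : D `<=` N.
  by move=> x Dx; apply: gN => /(_ Dx) /eqP; rewrite gt_eqF ?g0.
have := lt_le_trans muD0 (le_measure mu (mem_set mD) (mem_set mN) DN).
by move: muN0 => /= ->; rewrite ltxx.
Qed.

Lemma integral_mfrestr d (T : measurableType d) (R : realType)
  (mu : {measure set T -> \bar R}) (D : set T) (mD : measurable D)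
  (muDoo : mu D < +oo) (g : T -> \bar R) :
  \int[mu]_(x in D) g x = \int[mfrestr mD muDoo]_x (g \_ D) x.
Proof.
rewrite -integral_mkcond (@eq_measure_integral _ _ _ D (mfrestr mD muDoo) mu) //.
by move=> B mB BD; rewrite /= /mfrestr /mrestr /= setIidl.
Qed.

Section fubini_tonelli_restricted.
Context d1 d2 (T1 : measurableType d1) (T2 : measurableType d2) (R : realType).
Variables (m1 : {sigma_finite_measure set T1 -> \bar R})
  (m2 : {measure set T2 -> \bar R}) (D : set T2) (mD : measurable D).
Hypothesis m2Doo : m2 D < +oo.
Variable f : T1 -> T2 -> \bar R.
Hypothesis mf : measurable_fun (setT `*` D) (fun p : T1 * T2 => f p.1 p.2).
Hypothesis f0 : forall x y, D y -> 0 <= f x y.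

Let m2D := mfrestr mD m2Doo.
Let F := (fun p : T1 * T2 => f p.1 p.2) \_ (setT `*` D).

Let mF : measurable_fun setT F.
Proof. by apply/(measurable_restrictT _ _).1 => //; exact: measurableX. Qed.

Let F0 p : 0 <= F p.
Proof. by rewrite /F /patch; case: ifPn => // /set_mem [_ /f0]. Qed.

Let FE x y : F (x, y) = (f x \_ D) y.
Proof. by rewrite /F /patch in_setX in_setT. Qed.

Let integral_inE x : \int[m2]_(y in D) f x y = \int[m2D]_y F (x, y).
Proof. by rewrite integral_mfrestr; apply: eq_integral => y _; rewrite FE. Qed.

Lemma measurable_fun_integral_in :
  measurable_fun setT (fun x => \int[m2]_(y in D) f x y).
Proof.
rewrite (_ : (fun x => _) = fubini_F m2D F); last first.
  by apply/funext => x; rewrite integral_inE.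
exact: measurable_fun_fubini_tonelli_F.
Qed.

Lemma fubini_tonelli_in :
  \int[m1]_x \int[m2]_(y in D) f x y = \int[m2]_(y in D) \int[m1]_x f x y.
Proof.
under [LHS]eq_integral do rewrite integral_inE.
rewrite fubini_tonelli // integral_mfrestr; apply: eq_integral => y _.
under eq_integral do rewrite FE.
rewrite /patch; case: ifPn => Dy //; exact: integral0.
Qed.

End fubini_tonelli_restricted.

Theorem theorem1 (R : realType) (d1 d2 : measure_display)
  (Omega : measurableType d1) (P : probability Omega R)
  (X : measurableType d2) (lam : {measure set X -> \bar R}) (A : set X)
  (S : Type) (Rw : S -> X -> R) (gamma alpha : R)
  (Q : Omega -> S -> X -> R) (mu sigma2 : S -> X -> R) :
  measurable A -> 0 < lam A < +oo ->
  (0 < gamma < 1)%R -> (0 < alpha)%R ->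
  (forall s, measurable_fun (setT `*` A) (fun p : Omega * X => Q p.1 s p.2)) ->
  (forall s a, A a -> bounded_support P (fun w => Q w s a)) ->
  (forall s a, A a -> sub_gaussian P (fun w => Q w s a) (mu s a) (sigma2 s a)) ->
  (forall s, measurable_fun A (mu s)) ->
  (forall s, measurable_fun A (sigma2 s)) ->
  forall (s : S) (a : X) (s' : S), A a ->
  soft_backup P lam A Rw gamma alpha Q s a s'
  <= (Rw s a)%:E + gamma%:E * (alpha%:E *
       lne (\int[lam]_(a' in A)
              expeR ((alpha^-1 * mu s' a' + 2^-1 * alpha^-2 * sigma2 s' a')%:E))).
Proof.
move=> mA /andP[lamA0 lamAoo] /andP[gamma0 _] alpha0 mQ _ subG mmu msigma2.
move=> s a s' _; rewrite /soft_backup; apply: leeD2l.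
apply: lee_wpmul2l; first by rewrite lee_fin ltW.
pose f := fun w a' => expeR ((alpha^-1 * Q w s' a')%:E).
have mf : measurable_fun (setT `*` A) (fun p : Omega * X => f p.1 p.2).
  apply/measurable_EFinP; apply: measurableT_comp => //.
  by apply: measurable_funM => //; exact: mQ.
have f0 w a' : A a' -> 0 <= f w a' by move=> _; exact: expeR_ge0.
apply: integral_lne_le => //.
- apply: integral_gt0 => //; last by move=> a' _; rewrite lte_fin expR_gt0.
  apply/measurable_EFinP; apply: measurableT_comp => //.
  by apply: measurable_funD; apply: measurable_funM => //; exact: measurable_cst.
- exact: (measurable_fun_integral_in mA lamAoo mf f0).
- by move=> w; apply: integral_ge0 => a' /(f0 w).
rewrite (fubini_tonelli_in P mA lamAoo mf f0).
apply: le_integral_nomeas => a' /set_mem Aa'.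
by have := (subG s' a' Aa').2 alpha^-1%R; rewrite exprVn.
Qed.
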